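(* Let $P$ be a labeled protein tree on a protein set $\mathcal{P}$ (with respect to a gene tree $G$ and map $g:\mathcal{P}\to\mathcal{G}$), let $\mathbb{P}$ be the set of all inclusion-wise maximum creation-free protein subtrees of $P$, and let $\mathbb{P}_{span}$ be the span partition of $\mathcal{P}$ according to $\mathbb{P}$. If $P$ contains at least one node labeled $Creat$, then there exist two distinct sets $S_u,S_v\in\mathbb{P}_{span}$ such that $S_u$, $S_v$ and $S_u\cup S_v$ are each the leaf set of a complete subtree of $P$, and moreover: (1) $l_P(lca_P(S_u\cup S_v))=Creat$; (2) for every $t\in\{u,v\}$ and every $P_i\in span(S_t)$, $P|_{S_t}=P_i|_{S_t}$; (3) $span(S_u)\cap span(S_v)=\emptyset$; (4) $\{P_i|_{\mathcal{L}(P_i)-S_u} : P_i\in span(S_u)\} = \{P_i|_{\mathcal{L}(P_i)-S_v} : P_i\in span(S_v)\}$.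
   Context: Trees are rooted binary with leaves labeled bijectively by a finite set. $T[x]$ is the complete subtree of $T$ rooted at node $x$; a complete subtree is one of this form. $\mathcal{L}(T)$ is the leaf set, $x_l,x_r$ the children of an internal node $x$, $lca_T(L')$ the lowest common ancestor of $L'$. For $L'\subseteq\mathcal{L}(T)$, $T|_{L'}$ is the tree on $L'$ obtained from the subtree of $T$ spanned by $L'$, rooted at $lca_T(L')$, by suppressing all non-root nodes of degree 2. Setting: $\mathcal{P}$ (proteins), $\mathcal{G}$ (genes), surjective $g:\mathcal{P}\to\mathcal{G}$; $G$ a gene tree on $\mathcal{G}$ whose internal nodes are labeled $Spec$ or $Dup$ (via LCA-reconciliation with a species tree); $P$ a protein tree on $\mathcal{P}$. Extend $g$ to internal nodes of $P$ by $g(x)=lca_G(\{g(x'):x'\in\mathcal{L}(P[x])\})$. The labeling $l_P$ of internal nodes of $P$: $l_P(x)=Creat$ if $g(x)=g(x_l)$ or $g(x)=g(x_r)$; otherwise $l_P(x)$ equals the label ($Spec$ or $Dup$) of $g(x)$ in $G$. A labeled protein tree is $P$ together with $l_P$. Two proteins $x,y$ are orthologs if $l_P(lca_P(\{x,y\}))\neq Creat$. A creation-free protein subtree of $P$ is $P|_{L'}$ for $L'\subseteq\mathcal{P}$ in which every pair of proteins are orthologs; it is inclusion-wise maximum if $L'$ is maximal under inclusion among such sets. Write $\mathbb{P}=\{P_1,\dots,P_k\}$ for the set of all such maximum subtrees. For $x\in\mathcal{P}$, $span(x)=\{P_i\in\mathbb{P}: x\in\mathcal{L}(P_i)\}$.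 The span partition $\mathbb{P}_{span}$ is the partition of $\mathcal{P}$ into classes of proteins having equal $span$; for a class $S_t$, $span(S_t)$ is the common value $span(x)$, $x\in S_t$. *)

From HB Require Import structures.
From mathcomp Require Import all_boot.
Set Implicit Arguments. Unset Strict Implicit. Unset Printing Implicit Defensive.

(* Children order is irrelevant
   for tree identity: trees are compared via [same_tree] (equal cluster sets). *)
Inductive tree (A T : Type) := Leaf of T | Node of A & tree A T & tree A T.
Arguments Leaf {A T}. Arguments Node {A T}.

Section TreeEq.
Variables (A T : eqType).
Fixpoint tree_eqb (t1 t2 : tree A T) : bool :=
  match t1, t2 with
  | Leaf x, Leaf y => x == y
  | Node a l r, Node b l' r' => [&& a == b, tree_eqb l l' & tree_eqb r r']
  | _, _ => false
  end.
Lemma tree_eqP : Equality.axiom tree_eqb.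
Proof.
elim=> [x|a l IHl r IHr] [y|b l' r'] /=; try by constructor.
- by apply: (iffP eqP) => [->|[]].
- case: eqP => [->|ne]; last by constructor; case.
  case: IHl => [->|ne]; last by constructor; case.
  by case: IHr => [->|ne]; constructor => //; case.
Qed.
HB.instance Definition _ := hasDecEq.Build (tree A T) tree_eqP.
End TreeEq.

Inductive event := Spec | Dup | Creat.
Definition event_eqb (a b : event) := match a, b with
  | Spec, Spec | Dup, Dup | Creat, Creat => true | _, _ => false end.
Lemma event_eqP : Equality.axiom event_eqb.
Proof. by case; case; constructor. Qed.
HB.instance Definition _ := hasDecEq.Build event event_eqP.

Section Trees.
Variables (A : eqType) (T : finType).
Implicit Types (t s : tree A T) (L : {set T}).

Fixpoint leaves t : seq T :=
  match t with Leaf x => [:: x] | Node _ l r => leaves l ++ leaves r end.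
Definition leafset t : {set T} := [set x | x \in leaves t].

Fixpoint subtrees t : seq (tree A T) :=
  match t with Leaf x => [:: t] | Node _ l r => t :: subtrees l ++ subtrees r end.

Definition bij_labeled t := uniq (leaves t) /\ forall x : T, x \in leaves t.

Definition is_cluster t L := exists2 s, s \in subtrees t & leafset s = L.

Fixpoint lca t L : option (tree A T) :=
  match t with
  | Leaf x => if L \subset [set x] then Some t else None
  | Node _ l r =>
      if L \subset leafset l then lca l L
      else if L \subset leafset r then lca r L
      else if L \subset leafset t then Some t else None
  end.

(* t|_L : spanned subtree rooted at lca, degree-2 non-root nodes suppressed *)
Fixpoint restrict t L : option (tree A T) :=
  match t with
  | Leaf x => if x \in L then Some t else None
  | Node a l r =>
      match restrict l L, restrict r L with
      | Some l', Some r' => Some (Node a l' r')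
      | Some l', None => Some l'
      | None, Some r' => Some r'
      | None, None => None
      end
  end.
Definition orestrict (ot : option (tree A T)) L := obind (restrict ^~ L) ot.

(* equality of leaf-labeled rooted trees (up to isomorphism):
   same set of clusters; the empty tree is [None] *)
Definition clusters (ot : option (tree A T)) : seq {set T} :=
  if ot is Some t then map leafset (subtrees t) else [::].
Definition same_tree (o1 o2 : option (tree A T)) := clusters o1 =i clusters o2.
End Trees.

Section Protein.
Variables (Prot Gene : finType) (g : Prot -> Gene)
          (G : tree event Gene) (P : tree unit Prot).

Definition gene_labels_ok :=
  forall s, s \in subtrees G -> if s is Node e _ _ then e != Creat else true.

Definition gnode (x : tree unit Prot) := lca G (g @: leafset x).

Definition lP (x : tree unit Prot) : option event :=
  match x with
  | Leaf _ => None
  | Node _ l r =>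
      if (gnode x == gnode l) || (gnode x == gnode r) then Some Creat
      else if gnode x is Some (Node e _ _) then Some e else None
  end.

Definition orthologs (x y : Prot) : bool :=
  obind lP (lca P [set x; y]) != Some Creat.

(* L' is the leaf set of a creation-free protein subtree *)
Definition creation_free (L : {set Prot}) : bool :=
  [forall x in L, forall y in L, (x != y) ==> orthologs x y].

(* leaf sets of the inclusion-wise maximum creation-free subtrees P_i = P|_{L_i} *)
Definition maxCF : {set {set Prot}} := [set L | maxset creation_free L].

Definition span (x : Prot) : {set {set Prot}} := [set L in maxCF | x \in L].

Definition span_class (x : Prot) : {set Prot} := [set y | span y == span x].
Definition span_partition : {set {set Prot}} := [set span_class x | x : Prot].
End Protein.

(* Creation-free leaf sets are the cliques of the orthology graph, so the leaf sets
   of the P_i are its maximal cliques.  Take a lowest node labeled Creat, with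
   children l and r.  Two leaves of l (or of r) have their lca strictly below it,
   hence are orthologs; a leaf of l and a leaf of r are not; and a protein outside
   the node has the same lca, hence the same orthology status, with all of its
   leaves.  Consequently every maximal clique meeting L(l) contains L(l) and misses
   L(r), the span class of a leaf of l is exactly L(l), and exchanging L(l) for L(r)
   maps the maximal cliques through L(l) onto those through L(r) without changing
   the rest; so S_u = L(l) and S_v = L(r) work. *)

From HB Require Import structures.
From mathcomp Require Import all_boot.
Set Implicit Arguments. Unset Strict Implicit. Unset Printing Implicit Defensive.

Section Cliques.
Variables (T : finType) (O : rel T).
Implicit Types (A B M Z : {set T}) (x y w : T).

Definition clique A : bool := [forall x in A, forall y in A, (x != y) ==> O x y].
Definition maxcliques : {set {set T}} := [set A | maxset clique A].
Definition clique_span x : {set {set T}} := [set A in maxcliques | x \in A].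
Definition clique_class x : {set T} := [set y | clique_span y == clique_span x].

Lemma cliqueP A : reflect {in A &, forall x y, x != y -> O x y} (clique A).
Proof.
apply: (iffP forall_inP) => [cA x y xA yA|cA x xA].
  by have /forall_inP/(_ y yA)/implyP := cA x xA.
by apply/forall_inP => y yA; apply/implyP; apply: cA.
Qed.

Lemma cliqueS A B : A \subset B -> clique B -> clique A.
Proof. by move=> /subsetP sAB /cliqueP cB; apply/cliqueP => x y /sAB xB /sAB; apply: cB. Qed.

Lemma clique1 x : clique [set x].
Proof. by apply/cliqueP => y z /set1P-> /set1P->; rewrite eqxx. Qed.

Lemma maxclique_exists A : clique A -> exists2 M, M \in maxcliques & A \subset M.
Proof. by case/maxset_exists => M maxM sAM; exists M; rewrite ?inE. Qed.

Lemma maxclique_clique M : M \in maxcliques -> clique M.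
Proof. by rewrite inE => /maxsetp. Qed.

Lemma maxclique_sub M x y : M \in maxcliques -> x \in M -> y \in M -> x != y -> O x y.
Proof. by move/maxclique_clique/cliqueP; apply. Qed.

Hypothesis O_sym : symmetric O.

Lemma cliqueU A B : clique A -> clique B ->
  {in A & B, forall x y, x != y -> O x y} -> clique (A :|: B).
Proof.
move=> /cliqueP cA /cliqueP cB cAB; apply/cliqueP => x y.
case/setUP=> [xA|xB] /setUP[yA|yB]; [exact: cA | exact: cAB | | exact: cB].
by rewrite O_sym eq_sym; apply: cAB.
Qed.

(* Two cliques with no edge between them whose union is a module: the shape of the
   leaf sets of the children of a lowest [Creat] node in the orthology graph. *)
Record split_module (X Y : {set T}) : Prop := SplitModule {
  split_clique_l : {in X &, forall x y, O x y};
  split_clique_r : {in Y &, forall x y, O x y};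
  split_no_edge : {in X & Y, forall x y, ~~ O x y};
  split_module_out : {in X :|: Y &, forall x x', {in ~: (X :|: Y), forall w, O x w = O x' w}}
}.

Lemma split_moduleC X Y : split_module X Y -> split_module Y X.
Proof.
case=> cX cY nXY mXY; split=> // [x y yY xX|]; first by rewrite O_sym nXY.
by rewrite setUC.
Qed.

Section SplitModule.
Variables X Y : {set T}.
Hypothesis sXY : split_module X Y.

Lemma split_disjoint x : x \in X -> x \notin Y.
Proof.
move=> xX; apply/negP => xY.
by have := split_no_edge sXY xX xY; rewrite (split_clique_l sXY xX xX).
Qed.

Lemma clique_split_notin M x y : clique M -> x \in X -> y \in Y -> x \in M -> y \notin M.
Proof.
move=> /cliqueP cM xX yY xM; apply/negP => yM.
have xy : x != y by apply: contraTneq yY => <-; apply: split_disjoint.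
by have := split_no_edge sXY xX yY; rewrite cM.
Qed.

Lemma clique_exchange M Z x : clique M -> x \in M -> x \in X :|: Y ->
  Z \subset X :|: Y -> clique Z -> clique (M :\: (X :|: Y) :|: Z).
Proof.
move=> cM xM xXY /subsetP sZ cZ.
apply: cliqueU => [||w z /setDP[wM wXY] zZ _]; [exact: cliqueS (subsetDl _ _) cM | by [] |].
have wout : w \in ~: (X :|: Y) by rewrite inE.
rewrite O_sym -(split_module_out sXY xXY (sZ z zZ) wout).
by move/cliqueP: cM; apply=> //; apply: contraNneq wXY => <-.
Qed.

Lemma clique_split_l : clique X.
Proof. by apply/cliqueP => x y xX yX _; apply: (split_clique_l sXY). Qed.

Lemma clique_split_r : clique Y.
Proof. by apply/cliqueP => x y xY yY _; apply: (split_clique_r sXY). Qed.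

Lemma maxclique_split M x : M \in maxcliques -> x \in M -> x \in X ->
  M = M :\: (X :|: Y) :|: X.
Proof.
rewrite inE => maxM xM xX; have cM := maxsetp maxM.
apply/esym/(maxsetsup maxM).
  by apply: clique_exchange cM xM _ (subsetUl _ _) clique_split_l; rewrite inE xX.
apply/subsetP => y yM; rewrite !inE yM andbT orbC.
case: (boolP (y \in X)) => //= _; apply/negP => yY.
by rewrite (negPf (clique_split_notin cM xX yY xM)) in yM.
Qed.

Lemma in_clique_span_l x M : x \in X -> (M \in clique_span x) = (M \in maxcliques) && (X \subset M).
Proof.
move=> xX; rewrite inE; case: (boolP (M \in maxcliques)) => //= maxM.
apply/idP/idP => [xM|/subsetP]; last by apply.
by rewrite (maxclique_split maxM xM xX) subsetUr.
Qed.

Lemma clique_span_disjoint x y : x \in X -> y \in Y -> clique_span x :&: clique_span y = set0.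
Proof.
move=> xX yY; apply/setP => M; rewrite !inE.
apply/negP => /andP[/andP[/[dup] maxM /maxsetp cM xM] /andP[_ yM]].
by rewrite (negPf (clique_split_notin cM xX yY xM)) in yM.
Qed.

Lemma clique_span_outside x y w : x \in X -> y \in Y -> w \notin X ->
  clique_span w != clique_span x.
Proof.
move=> xX yY wX; apply/eqP => span_wx.
have [Oxw | nOxw] := boolP (O x w).
  have wout : w \in ~: (X :|: Y).
    rewrite !inE negb_or wX /=; apply: contraL Oxw => wY.
    exact: (split_no_edge sXY xX wY).
  have xXY : x \in X :|: Y by rewrite inE xX.
  have yXY : y \in X :|: Y by rewrite inE yY orbT.
  have Oyw : O y w by rewrite (split_module_out sXY yXY xXY wout).
  have cwy : clique [set w; y].
    by apply/cliqueP => a b /set2P[]-> /set2P[]->; rewrite ?eqxx // O_sym.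
  have [M maxM /subsetP swyM] := maxclique_exists cwy.
  have : M \in clique_span w by rewrite inE maxM swyM ?set21.
  rewrite span_wx inE => /andP[_ xM].
  have yM : y \in M by rewrite swyM ?set22.
  by rewrite (negPf (clique_split_notin (maxclique_clique maxM) xX yY xM)) in yM.
have [M maxM /subsetP sxM] := maxclique_exists (clique1 x).
have : M \in clique_span x by rewrite inE maxM sxM ?set11.
rewrite -span_wx inE => /andP[_ wM].
have xM := sxM x (set11 x).
by move: nOxw; rewrite (maxclique_sub maxM xM wM) //; apply: contraNneq wX => <-.
Qed.

Lemma clique_class_l x : x \in X -> Y != set0 -> clique_class x = X.
Proof.
move=> xX /set0Pn[y yY]; apply/setP => w; rewrite inE.
have [wX|wX] := boolP (w \in X); last exact/negbTE/(clique_span_outside xX yY wX).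
by apply/eqP/setP => M; rewrite (in_clique_span_l _ wX) (in_clique_span_l _ xX).
Qed.

Lemma maxclique_swap M x y : M \in maxcliques -> x \in X -> y \in Y -> x \in M ->
  M :\: (X :|: Y) :|: Y \in maxcliques.
Proof.
rewrite !inE => maxM xX yY xM; have cM := maxsetp maxM.
apply/maxsetP; split => [|B cB sNB].
  by apply: clique_exchange cM xM _ (subsetUr X Y) clique_split_r; rewrite inE xX.
have yB : y \in B by rewrite (subsetP sNB) // inE yY orbT.
have BM : B :\: (X :|: Y) :|: X = M.
  apply: (maxsetsup maxM); first by apply: clique_exchange cB yB _ (subsetUl X Y)
    clique_split_l; rewrite inE yY orbT.
  apply/subsetP => z zM; rewrite !inE.
  case: (boolP (z \in X)) => zX; rewrite ?orbT //= orbF.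
  have zY : z \notin Y := contraL (clique_split_notin cM xX ^~ xM) zM.
  by rewrite zY (subsetP sNB) // !inE zM (negPf zX) (negPf zY).
apply/eqP; rewrite eqEsubset sNB andbT; apply/subsetP => w wB.
rewrite !inE; case: (boolP (w \in Y)) => wY; rewrite ?orbT //= !orbF.
have wX : w \notin X by apply: contraL yB => wX; exact: clique_split_notin cB wX yY wB.
by rewrite -BM !inE wB (negPf wX) (negPf wY).
Qed.

Lemma clique_span_swap x y M : x \in X -> y \in Y -> M \in clique_span x ->
  exists2 N, N \in clique_span y & M :\: X = N :\: Y.
Proof.
move=> xX yY; rewrite (in_clique_span_l _ xX) => /andP[maxM /subsetP/(_ x xX) xM].
have MY z : z \in Y -> z \notin M := clique_split_notin (maxclique_clique maxM) xX ^~ xM.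
exists (M :\: (X :|: Y) :|: Y).
  by rewrite inE (maxclique_swap maxM xX yY xM) !inE yY orbT.
apply/setP => z; rewrite !inE.
by case: (boolP (z \in Y)) => [/MY/negPf->|_]; rewrite ?andbF ?orbF.
Qed.
End SplitModule.
End Cliques.

Section Subtrees.
Variables (A : eqType) (T : finType).
Implicit Types (t s l r : tree A T) (L : {set T}) (a : A) (p : pred (tree A T)).

Definition strict_subtrees t : seq (tree A T) :=
  if t is Node _ l r then subtrees l ++ subtrees r else [::].

Lemma subtreesE t : subtrees t = t :: strict_subtrees t.
Proof. by case: t. Qed.

Lemma subtrees_refl t : t \in subtrees t.
Proof. by rewrite subtreesE mem_head. Qed.

Lemma strict_subtrees_sub t : {subset strict_subtrees t <= subtrees t}.
Proof. by move=> s; rewrite subtreesE in_cons orbC => ->. Qed.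

Lemma subtrees_trans t s1 s2 : s1 \in subtrees t -> s2 \in subtrees s1 -> s2 \in subtrees t.
Proof.
elim: t => [x|a l IHl r IHr] /=; first by rewrite inE => /eqP ->.
rewrite inE mem_cat => /orP[/eqP -> // | /orP[s1l|s1r]] s2s1.
- by rewrite inE mem_cat (IHl s1l s2s1) orbT.
- by rewrite inE mem_cat (IHr s1r s2s1) !orbT.
Qed.

Lemma strict_subtrees_trans t s1 s2 :
  s1 \in strict_subtrees t -> s2 \in subtrees s1 -> s2 \in strict_subtrees t.
Proof.
case: t => [//|a l r] /=; rewrite !mem_cat => /orP[s1l|s1r] s2s1.
- by rewrite (subtrees_trans s1l s2s1).
- by rewrite (subtrees_trans s1r s2s1) orbT.
Qed.

Lemma leafset_Leaf x : leafset (Leaf x : tree A T) = [set x].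
Proof. by apply/setP => y; rewrite !inE. Qed.

Lemma leafset_Node a l r : leafset (Node a l r) = leafset l :|: leafset r.
Proof. by apply/setP => x; rewrite !inE mem_cat. Qed.

Lemma leafset_neq0 t : leafset t != set0.
Proof.
apply/set0Pn; elim: t => [x|a l [x xl] r _]; first by exists x; rewrite inE mem_head.
by exists x; rewrite leafset_Node inE xl.
Qed.

Lemma leafset_subtrees t s : s \in subtrees t -> leafset s \subset leafset t.
Proof.
elim: t => [x|a l IHl r IHr] /=; first by rewrite inE => /eqP ->.
rewrite inE mem_cat leafset_Node => /orP[/eqP ->|/orP[/IHl|/IHr] sst].
- by rewrite leafset_Node.
- exact: subset_trans sst (subsetUl _ _).
- exact: subset_trans sst (subsetUr _ _).
Qed.

Lemma uniq_leaves_subtrees t s : uniq (leaves t) -> s \in subtrees t -> uniq (leaves s).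
Proof.
elim: t => [x|a l IHl r IHr] /=; first by move=> _; rewrite inE => /eqP ->.
move=> U; move: (U); rewrite cat_uniq => /and3P[Ul _ Ur].
by rewrite inE mem_cat => /orP[/eqP ->|/orP[/(IHl Ul)|/(IHr Ur)]].
Qed.

Lemma leafset_children_disjoint a l r :
  uniq (leaves (Node a l r)) -> [disjoint leafset l & leafset r].
Proof.
rewrite /= cat_uniq => /and3P[_ lr _]; rewrite -setI_eq0; apply/eqP/setP => x.
by rewrite !inE; apply/negP => /andP[xl xr]; move/hasP: lr; apply; exists x.
Qed.

Lemma leafset_laminar t s1 s2 x : uniq (leaves t) ->
  s1 \in subtrees t -> s2 \in subtrees t -> x \in leafset s1 -> x \in leafset s2 ->
  (leafset s1 \subset leafset s2) || (leafset s2 \subset leafset s1).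
Proof.
elim: t s1 s2 => [y|a l IHl r IHr] s1 s2 U s1t s2t xs1 xs2.
  by move: s1t s2t; rewrite !inE => /eqP-> /eqP->; rewrite subxx.
have [Ul Ur] : uniq (leaves l) /\ uniq (leaves r).
  by move: U; rewrite /= cat_uniq => /and3P[-> _ ->].
have disj := leafset_children_disjoint U.
move: (s1t) (s2t); rewrite /= !in_cons !mem_cat.
case/predU1P=> [->|s1lr]; first by rewrite (leafset_subtrees s2t) orbT.
case/predU1P=> [->|/orP[s2l|s2r]]; first by rewrite (leafset_subtrees s1t).
all: case/orP: s1lr => [s1l|s1r].
- exact: IHl xs1 xs2.
- have := disjointFr disj (subsetP (leafset_subtrees s2l) x xs2).
  by rewrite (subsetP (leafset_subtrees s1r) x xs1).
- have := disjointFr disj (subsetP (leafset_subtrees s1l) x xs1).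
  by rewrite (subsetP (leafset_subtrees s2r) x xs2).
- exact: IHr xs1 xs2.
Qed.

Lemma eq_lca t L L' :
  {in subtrees t, forall s, (L \subset leafset s) = (L' \subset leafset s)} ->
  lca t L = lca t L'.
Proof.
elim: t => [x|a l IHl r IHr] /= eqL.
  by rewrite -leafset_Leaf eqL ?mem_head.
have subl : {subset subtrees l <= subtrees (Node a l r)}.
  by move=> s sl; rewrite in_cons mem_cat sl orbT.
have subr : {subset subtrees r <= subtrees (Node a l r)}.
  by move=> s sr; rewrite in_cons mem_cat sr !orbT.
rewrite (eqL _ (mem_head _ _)) (eqL _ (subl _ (subtrees_refl l))).
rewrite (eqL _ (subr _ (subtrees_refl r))).
by rewrite (IHl (fun s sl => eqL s (subl s sl))) (IHr (fun s sr => eqL s (subr s sr))).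
Qed.

Lemma lca_set2_out t s y y' w : uniq (leaves t) -> s \in subtrees t ->
  y \in leafset s -> y' \in leafset s -> w \notin leafset s ->
  lca t [set y; w] = lca t [set y'; w].
Proof.
move=> U st ys y's ws; apply: eq_lca => s' s't; rewrite !subUset !sub1set.
case ws' : (w \in leafset s'); rewrite ?andbF // !andbT.
have grow z : z \in leafset s -> z \in leafset s' -> leafset s \subset leafset s'.
  move=> zs zs'; case/orP: (leafset_laminar U st s't zs zs') => // /subsetP/(_ w ws').
  by rewrite (negPf ws).
by apply/idP/idP => [/(grow y ys)|/(grow y' y's)] /subsetP; apply.
Qed.

Lemma lca_subtree t s L : uniq (leaves t) -> s \in subtrees t -> L != set0 ->
  L \subset leafset s -> lca t L = lca s L.
Proof.
elim: t => [x|a l IHl r IHr] U; first by rewrite inE => /eqP->.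
have [Ul Ur] : uniq (leaves l) /\ uniq (leaves r).
  by move: U; rewrite /= cat_uniq => /and3P[-> _ ->].
rewrite in_cons mem_cat => /orP[/eqP-> //|/orP[sl|sr]] L0 Ls /=.
  by rewrite (subset_trans Ls (leafset_subtrees sl)); apply: IHl.
have Lr := subset_trans Ls (leafset_subtrees sr).
have [y yL] := set0Pn _ L0.
have -> : L \subset leafset l = false.
  apply: contraTF (subsetP Lr y yL) => /subsetP/(_ y yL) yl.
  by rewrite (disjointFr (leafset_children_disjoint U) yl).
by rewrite Lr; apply: IHr.
Qed.

Lemma lca_subtrees s L : L \subset leafset s ->
  exists2 s', s' \in subtrees s & lca s L = Some s'.
Proof.
elim: s => [x|a l IHl r IHr] /= Ls.
  by rewrite -leafset_Leaf Ls; exists (Leaf x); rewrite ?mem_head.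
case: ifP => [/IHl[s' s'l ->]|_]; first by exists s'; rewrite // in_cons mem_cat s'l orbT.
case: ifP => [/IHr[s' s'r ->]|_]; first by exists s'; rewrite // in_cons mem_cat s'r !orbT.
by rewrite Ls; exists (Node a l r); rewrite ?mem_head.
Qed.

Lemma lca_Node t a l r L x y : uniq (leaves t) -> Node a l r \in subtrees t ->
  L \subset leafset (Node a l r) -> x \in L -> x \in leafset l -> y \in L -> y \in leafset r ->
  lca t L = Some (Node a l r).
Proof.
move=> U xt LN xL xl yL yr.
have L0 : L != set0 by apply/set0Pn; exists x.
have disj := leafset_children_disjoint (uniq_leaves_subtrees U xt).
rewrite (lca_subtree U xt L0 LN) /= LN.
have -> : L \subset leafset l = false.
  by apply: contraTF yr => /subsetP/(_ y yL) yl; rewrite (disjointFr disj yl).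
have -> // : L \subset leafset r = false.
by apply: contraTF xl => /subsetP/(_ x xL) xr; rewrite (disjointFl disj xr).
Qed.

Lemma orestrict_restrict t L L' : L \subset L' ->
  orestrict (restrict t L') L = restrict t L.
Proof.
move=> /subsetP sLL'; rewrite /orestrict.
elim: t => [x|a l IHl r IHr] /=.
  by case: ifP => [|xL'] //=; case: ifP => // /sLL'; rewrite xL'.
move: IHl IHr; case: (restrict l L') => [l'|]; case: (restrict r L') => [r'|] /= <- <- //.
all: by case: restrict.
Qed.

Lemma exists_minimal_subtree t p : (exists2 s, s \in subtrees t & p s) ->
  exists2 s, s \in subtrees t & p s && ~~ has p (strict_subtrees s).
Proof.
elim: t => [x|a l IHl r IHr] /=.
  by case=> s; rewrite inE => /eqP-> ps; exists (Leaf x); rewrite ?mem_head ?ps.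
have sub s' : s' \in subtrees l ++ subtrees r -> s' \in subtrees (Node a l r).
  by rewrite in_cons => ->; rewrite orbT.
case: (boolP (has p (subtrees l))) => [/hasP[s sl ps]|nl].
  have [s' s'l] := IHl (ex_intro2 _ _ s sl ps).
  by exists s' => //; rewrite sub // mem_cat s'l.
case: (boolP (has p (subtrees r))) => [/hasP[s sr ps]|nr].
  have [s' s'r] := IHr (ex_intro2 _ _ s sr ps).
  by exists s' => //; rewrite sub // mem_cat s'r orbT.
case=> s; rewrite in_cons mem_cat => /orP[/eqP->|/orP[sl|sr]] ps.
- by exists (Node a l r); rewrite ?mem_head // ps has_cat negb_or nl nr.
- by case/hasP: nl; exists s.
- by case/hasP: nr; exists s.
Qed.
End Subtrees.

Lemma clique_span_swap_restrict (A : eqType) (T : finType) (t : tree A T) (O : rel T)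
    (X Y M : {set T}) x y :
  symmetric O -> split_module O X Y -> x \in X -> y \in Y -> M \in clique_span O x ->
  exists2 N, N \in clique_span O y &
    orestrict (restrict t M) (M :\: X) = orestrict (restrict t N) (N :\: Y).
Proof.
move=> Osym sXY xX yY /(clique_span_swap Osym sXY xX yY)[N NS eqMN].
by exists N => //; rewrite !orestrict_restrict ?subsetDl // eqMN.
Qed.

Section Orthology.
Variables (Prot Gene : finType) (g : Prot -> Gene) (G : tree event Gene) (P : tree unit Prot).
Hypothesis uniqP : uniq (leaves P).

Lemma orthologs_sym : symmetric (orthologs g G P).
Proof. by move=> x y; rewrite /orthologs setUC. Qed.

Lemma span_clique_span : span g G P = clique_span (orthologs g G P).
Proof. by []. Qed.

Lemma span_class_clique_class : span_class g G P = clique_class (orthologs g G P).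
Proof. by []. Qed.

Variables (a : unit) (l r : tree unit Prot).
Hypothesis xP : Node a l r \in subtrees P.
Hypothesis x_creat : lP g G (Node a l r) = Some Creat.
Hypothesis x_min : ~~ has (fun s => lP g G s == Some Creat) (strict_subtrees (Node a l r)).

Lemma lP_lca_Node (L : {set Prot}) x y : L \subset leafset (Node a l r) ->
  x \in L -> x \in leafset l -> y \in L -> y \in leafset r ->
  obind (lP g G) (lca P L) = Some Creat.
Proof. by move=> LN xL xl yL yr; rewrite (lca_Node uniqP xP LN xL xl yL yr). Qed.

Lemma orthologs_below s x y : s \in strict_subtrees (Node a l r) ->
  x \in leafset s -> y \in leafset s -> orthologs g G P x y.
Proof.
move=> sx xs ys.
have sP : s \in subtrees P := subtrees_trans xP (strict_subtrees_sub sx).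
have sub : [set x; y] \subset leafset s by rewrite subUset !sub1set xs ys.
have xy0 : [set x; y] != set0 by apply/set0Pn; exists x; rewrite set21.
rewrite /orthologs (lca_subtree uniqP sP xy0 sub).
have [s' s's ->] := lca_subtrees sub.
by apply: contra x_min => s'C; apply/hasP; exists s'; first exact: strict_subtrees_trans sx s's.
Qed.

Lemma minimal_creat_split_module : split_module (orthologs g G P) (leafset l) (leafset r).
Proof.
split.
- by move=> x y xl yl; apply: (orthologs_below (s := l)) => //; rewrite mem_cat subtrees_refl.
- by move=> x y xr yr; apply: (orthologs_below (s := r)) => //; rewrite mem_cat subtrees_refl orbT.
- move=> x y xl yr; rewrite /orthologs negbK.
  apply/eqP/(lP_lca_Node _ (set21 x y) xl (set22 x y) yr).
  by rewrite leafset_Node subUset !sub1set !in_setU xl yr orbT.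
- move=> x x' + + w; rewrite -!(leafset_Node a) in_setC => xN x'N wN.
  by rewrite /orthologs (lca_set2_out uniqP xP xN x'N wN).
Qed.
End Orthology.

Theorem lemma1 (Prot Gene : finType) (g : Prot -> Gene)
    (G : tree event Gene) (P : tree unit Prot) :
  bij_labeled G -> gene_labels_ok G -> (forall y : Gene, exists x, g x = y) ->
  bij_labeled P ->
  (exists2 x, x \in subtrees P & lP g G x = Some Creat) ->
  exists u v : Prot,
    let Su := span_class g G P u in
    let Sv := span_class g G P v in
      Su \in span_partition g G P /\ Sv \in span_partition g G P /\ Su != Sv /\
        is_cluster P Su /\ is_cluster P Sv /\ is_cluster P (Su :|: Sv) /\
        (* (1) *) obind (lP g G) (lca P (Su :|: Sv)) = Some Creat /\
        (* (2) *) (forall Li, Li \in span g G P u ->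
                    same_tree (restrict P Su) (orestrict (restrict P Li) Su)) /\
                  (forall Li, Li \in span g G P v ->
                    same_tree (restrict P Sv) (orestrict (restrict P Li) Sv)) /\
        (* (3) *) span g G P u :&: span g G P v = set0 /\
        (* (4) *) (forall Li, Li \in span g G P u -> exists2 Lj, Lj \in span g G P v &
                    same_tree (orestrict (restrict P Li) (Li :\: Su))
                              (orestrict (restrict P Lj) (Lj :\: Sv))) /\
                  (forall Lj, Lj \in span g G P v -> exists2 Li, Li \in span g G P u &
                    same_tree (orestrict (restrict P Li) (Li :\: Su))
                              (orestrict (restrict P Lj) (Lj :\: Sv))).
Proof.
move=> _ _ _ [uniqP _] [x0 x0P x0_creat].
have [[//|a l r] xP /andP[/eqP x_creat x_min]] := exists_minimal_subtree
  (p := fun s => lP g G s == Some Creat) (ex_intro2 _ _ x0 x0P (introT eqP x0_creat)).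
have Osym := @orthologs_sym _ _ g G P.
have sXY := minimal_creat_split_module uniqP xP x_creat x_min.
have sYX := split_moduleC Osym sXY.
have [u ul] := set0Pn _ (leafset_neq0 l); have [v vr] := set0Pn _ (leafset_neq0 r).
have Su : span_class g G P u = leafset l.
  by rewrite span_class_clique_class (clique_class_l Osym sXY ul (leafset_neq0 r)).
have Sv : span_class g G P v = leafset r.
  by rewrite span_class_clique_class (clique_class_l Osym sYX vr (leafset_neq0 l)).
have subP s : s \in strict_subtrees (Node a l r) -> s \in subtrees P.
  by move/strict_subtrees_sub; apply: subtrees_trans.
exists u, v; cbv zeta; rewrite !span_clique_span.
do 2 (split; first exact: imset_f).
rewrite Su Sv; split; first by apply: contraTneq (split_disjoint sXY ul) => <-; rewrite negbK.
split; first by exists l; rewrite ?subP ?mem_cat ?subtrees_refl.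
split; first by exists r; rewrite ?subP ?mem_cat ?subtrees_refl ?orbT.
split; first by exists (Node a l r); rewrite ?leafset_Node.
split; first by apply: (lP_lca_Node uniqP xP x_creat (x := u) (y := v));
  rewrite ?leafset_Node ?in_setU ?ul ?vr ?orbT.
split.
  by move=> Li; rewrite (in_clique_span_l Osym sXY _ ul) => /andP[_ /orestrict_restrict->].
split.
  by move=> Li; rewrite (in_clique_span_l Osym sYX _ vr) => /andP[_ /orestrict_restrict->].
split; first exact: (clique_span_disjoint sXY ul vr).
split=> [Li | Lj].
  by case/(clique_span_swap_restrict P Osym sXY ul vr) => Lj LjS eqLij; exists Lj; rewrite ?eqLij.
by case/(clique_span_swap_restrict P Osym sYX vr ul) => Li LiS eqLji; exists Li; rewrite ?eqLji.
Qed.
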